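(* For every $n\in\mathbb{N}$, \[ \frac{2}{3n+1}\sum_{j=0}^{2n}\sum_{i=0}^{j}\frac{\binom{3n+1}{i}}{\binom{3n}{j}}=\psi(3n+2)-\psi(n+1)-\log 2+\frac{3n+2}{2n+2}\,{}_3F_2\!\left(1,1,3n+3;\,2,n+2;\,\tfrac12\right). \]
   Context: $\psi=\Gamma'/\Gamma$ is the digamma function (so $\psi(3n+2)-\psi(n+1)=H_{3n+1}-H_n$ with $H_m=\sum_{k=1}^m\frac1k$). Pochhammer symbol: $(\alpha)_0=1$, $(\alpha)_k=\alpha(\alpha+1)\cdots(\alpha+k-1)$. ${}_3F_2(a,b,c;d,e;z)=\sum_{k\ge0}\frac{(a)_k(b)_k(c)_k}{(d)_k(e)_k}\frac{z^k}{k!}$. *)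

From Stdlib Require Import Reals Arith Factorial.
Open Scope R_scope.

Fixpoint poch (a : R) (k : nat) : R :=
  match k with
  | O => 1
  | S k' => poch a k' * (a + INR k')
  end.

Fixpoint harm (m : nat) : R :=
  match m with
  | O => 0
  | S m' => harm m' + / INR (S m')
  end.

Definition hyp3F2_term (a b c d e z : R) (k : nat) : R :=
  poch a k * poch b k * poch c k / (poch d k * poch e k) * z ^ k / INR (fact k).

Definition is_hyp3F2 (a b c d e z S : R) : Prop :=
  infinite_sum (hyp3F2_term a b c d e z) S.

(* Put m = 3n + 2 and T_r = sum_k C(m+k, r) 2^-k / (k+1), so that the 3F2 series is
   T_(2n+1) / C(m, 2n+1).  Pascal's rule gives sum_k C(a+k, r) 2^-k = 2 sum_(i<=r) C(a, i)
   and the first-order recurrence (r+1) T_(r+1) = (m-1-r) T_r + 2 sum_(i<=r) C(m, i),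
   starting from T_0 = 2 ln 2 (the Mercator series at 1/2).  Solving the recurrence
   expresses T_r through ln 2, harmonic numbers and the double binomial sum of the
   left-hand side; evaluating at r = 2n+1 is the theorem. *)

From Stdlib Require Import Reals Factorial Lra Lia.
From Coquelicot Require Import Rcomplements Rbar Lim_seq Hierarchy Series Derive AutoDerive.
Open Scope R_scope.

Lemma is_series_iff_sum_f_R0 (a : nat -> R) (l : R) :
  is_series a l <-> is_lim_seq (fun K => sum_f_R0 a K) l.
Proof.
  split; intros H.
  - apply (is_lim_seq_ext (sum_n a)); [intros K; apply sum_n_Reals | exact H].
  - apply (is_lim_seq_ext _ (sum_n a)) in H; [exact H | intros K; symmetry; apply sum_n_Reals].
Qed.

Lemma derivable_pt_lim_log_partial (K : nat) (x : R) :
  derivable_pt_lim (fun y => sum_f_R0 (fun k => y ^ S k / INR (S k)) K) x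
    (sum_f_R0 (fun k => x ^ k) K).
Proof.
  induction K as [|K IH]; cbn [sum_f_R0].
  - apply is_derive_Reals. auto_derive; [auto | simpl; field].
  - apply (derivable_pt_lim_plus _ (fun y => y ^ S (S K) / INR (S (S K)))); [exact IH|].
    apply is_derive_Reals. auto_derive; [auto|].
    (* [auto_derive] has unfolded [INR (S K)] by one step. *)
    change (match K with 0%nat => 1 | S _ => INR K + 1 end) with (INR (S K)).
    rewrite <- S_INR. simpl pow. field. apply not_0_INR. lia.
Qed.

Lemma log_partial_remainder (K : nat) (x : R) : 0 < x < 1 ->
  0 <= - ln (1 - x) - sum_f_R0 (fun k => x ^ S k / INR (S k)) K <= x ^ S (S K) / (1 - x).
Proof.
  intros Hx.
  set (g := fun y => - ln (1 - y) - sum_f_R0 (fun k => y ^ S k / INR (S k)) K).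
  assert (g_derive : forall c, 0 <= c <= x -> derivable_pt_lim g c (c ^ S K / (1 - c))).
  { intros c Hc. unfold g.
    replace (c ^ S K / (1 - c)) with (/ (1 - c) - sum_f_R0 (fun k => c ^ k) K)
      by (rewrite tech3 by lra; field; lra).
    apply derivable_pt_lim_minus; [|apply derivable_pt_lim_log_partial].
    apply is_derive_Reals. auto_derive; [lra | field; lra]. }
  assert (g0 : g 0 = 0).
  { unfold g. rewrite Rminus_0_r, ln_1.
    rewrite sum_eq_R0; [ring|]. intros k _. simpl. unfold Rdiv. ring. }
  destruct (MVT_cor2 g _ 0 x ltac:(lra) g_derive) as [c [Hmvt Hc]].
  rewrite g0, !Rminus_0_r in Hmvt. fold (g x). rewrite Hmvt.
  assert (0 <= c ^ S K <= x ^ S K) by (split; [apply pow_le | apply pow_incr]; lra).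
  assert (0 < / (1 - c) <= / (1 - x))
    by (split; [apply Rinv_0_lt_compat | apply Rinv_le_contravar]; lra).
  assert (c ^ S K * / (1 - c) <= x ^ S K * / (1 - x))
    by (apply Rmult_le_compat; lra).
  replace (x ^ S (S K) / (1 - x)) with (x ^ S K * / (1 - x) * x) by (simpl; field; lra).
  unfold Rdiv. split; [|apply Rmult_le_compat_r; lra].
  apply Rmult_le_pos; [apply Rmult_le_pos|]; lra.
Qed.

Lemma is_series_log1m (x : R) : 0 < x < 1 ->
  is_series (fun k => x ^ S k / INR (S k)) (- ln (1 - x)).
Proof.
  intros Hx. apply is_series_iff_sum_f_R0.
  apply (is_lim_seq_le_le (fun K => - ln (1 - x) - x ^ S (S K) / (1 - x)) _ (fun _ => - ln (1 - x))).
  - intros K. pose proof (log_partial_remainder K x Hx). lra.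
  - replace (Finite (- ln (1 - x))) with (Rbar_minus (- ln (1 - x)) (0 / (1 - x)))
      by (simpl; f_equal; unfold Rdiv; ring).
    apply is_lim_seq_minus'; [apply is_lim_seq_const|].
    apply is_lim_seq_div'; [|apply is_lim_seq_const|lra].
    apply (is_lim_seq_incr_1 (fun K => x ^ S K)), (is_lim_seq_incr_1 (fun K => x ^ K)).
    apply is_lim_seq_geom. rewrite Rabs_pos_eq; lra.
  - apply is_lim_seq_const.
Qed.

Lemma is_series_log2 : is_series (fun k => (1/2) ^ k / INR (S k)) (2 * ln 2).
Proof.
  replace (2 * ln 2) with (2 * - ln (1 - 1/2))
    by (replace (1 - 1/2) with (/ 2) by field; rewrite ln_Rinv; lra).
  apply (is_series_ext (fun k => 2 * ((1/2) ^ S k / INR (S k)))).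
  - intros k. change (@eq R (2 * ((1/2) ^ S k / INR (S k))) ((1/2) ^ k / INR (S k))).
    rewrite <- tech_pow_Rmult. field. apply not_0_INR. lia.
  - exact (is_series_scal 2 _ _ (is_series_log1m (1/2) ltac:(lra))).
Qed.

Lemma sum_f_R0_le_series (a : nat -> R) (l : R) :
  (forall k, 0 <= a k) -> is_series a l -> forall K, sum_f_R0 a K <= l.
Proof.
  intros a_ge0 Ha. apply is_lim_seq_incr_compare; [now apply is_series_iff_sum_f_R0|].
  intros K. rewrite tech5. specialize (a_ge0 (S K)). lra.
Qed.

Lemma ex_series_bounded_nonneg (a : nat -> R) (M : R) :
  (forall k, 0 <= a k) -> (forall K, sum_f_R0 a K <= M) -> ex_series a.
Proof.
  intros a_ge0 a_bounded.
  destruct (ex_finite_lim_seq_incr (fun K => sum_f_R0 a K) M) as [l Hl]; [|exact a_bounded|].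
  - intros K. rewrite tech5. specialize (a_ge0 (S K)). lra.
  - exists l. now apply is_series_iff_sum_f_R0.
Qed.

(* Stdlib's [C n k] uses truncated subtraction, so it is positive even for [k > n]. *)
Lemma C_pos (n k : nat) : 0 < C n k.
Proof.
  apply Rdiv_lt_0_compat; [|apply Rmult_lt_0_compat]; apply INR_fact_lt_0.
Qed.

Lemma sum_C_succ (n r : nat) : (r < n)%nat ->
  sum_f_R0 (fun i => C (S n) i) r = 2 * sum_f_R0 (fun i => C n i) r - C n r.
Proof.
  induction r as [|r IH]; intros Hr.
  - simpl. rewrite !C_n_0. ring.
  - rewrite !tech5, IH, <- (pascal n r) by lia. ring.
Qed.

Lemma is_series_C_geom (a r : nat) : (r <= a)%nat ->
  is_series (fun k => C (a + k) r * (1/2) ^ k) (2 * sum_f_R0 (fun i => C a i) r).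
Proof.
  induction r as [|r IH]; intros Hr.
  - simpl. rewrite C_n_0.
    apply (is_series_ext (fun k => (1/2) ^ k)); [intros k; now rewrite C_n_0, Rmult_1_l|].
    replace (2 * 1) with (/ (1 - 1/2)) by field.
    apply is_series_geom. rewrite Rabs_pos_eq; lra.
  - specialize (IH ltac:(lia)).
    set (x := fun k => C (a + k) (S r) * (1/2) ^ k) in *.
    set (y := fun k => C (a + k) r * (1/2) ^ k) in IH.
    set (ly := 2 * sum_f_R0 (fun i => C a i) r) in IH.
    assert (x_succ : forall k, x (S k) = (x k + y k) / 2).
    { intros k. unfold x, y. rewrite Nat.add_succ_r, <- pascal by lia. simpl. field. }
    assert (x_partial : forall K, sum_f_R0 x K = sum_f_R0 y K + 2 * x O - 2 * x (S K)).
    { induction K as [|K IHK]; [simpl; rewrite x_succ; field|].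
      rewrite !tech5, IHK, (x_succ (S K)). field. }
    assert (x_ge0 : forall k, 0 <= x k).
    { intros k. apply Rmult_le_pos; [left; apply C_pos | apply pow_le; lra]. }
    assert (y_ge0 : forall k, 0 <= y k).
    { intros k. apply Rmult_le_pos; [left; apply C_pos | apply pow_le; lra]. }
    assert (x_ex : ex_series x).
    { apply (ex_series_bounded_nonneg _ (ly + 2 * x O)); [exact x_ge0|].
      intros K. rewrite x_partial.
      pose proof (sum_f_R0_le_series y ly y_ge0 IH K). specialize (x_ge0 (S K)). lra. }
    assert (x_sum : Series x = 2 * x O + ly).
    { assert (E : Series x = x O + (Series x + ly) / 2).
      { rewrite (Series_incr_1 x x_ex) at 1. f_equal.
        rewrite (Series_ext _ (fun k => / 2 * (x k + y k))) by (intros k; rewrite x_succ; field).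
        rewrite Series_scal_l, Series_plus, (is_series_unique y ly IH); [field|exact x_ex|].
        exists ly. exact IH. }
      lra. }
    replace (2 * sum_f_R0 (fun i => C a i) (S r)) with (Series x)
      by (rewrite x_sum, tech5; unfold x, ly; rewrite Nat.add_0_r; simpl; ring).
    now apply Series_correct.
Qed.

Definition binom_log_term (m r k : nat) : R := C (m + k) r * (1/2) ^ k / INR (S k).

Lemma binom_log_term_succ (m r k : nat) : (r < m)%nat ->
  binom_log_term m (S r) k
  = / INR (S r) * (INR (m - S r) * binom_log_term m r k + C (m + k) r * (1/2) ^ k).
Proof.
  intros Hr. unfold binom_log_term.
  rewrite pascal_step3 by lia.
  replace (m + k - r)%nat with (S k + (m - S r))%nat by lia.
  rewrite plus_INR.
  assert (0 < INR (S k)) by (apply lt_0_INR; lia).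
  assert (0 < INR (S r)) by (apply lt_0_INR; lia).
  field. lra.
Qed.

Lemma is_series_binom_log_succ (m r : nat) (l : R) : (r < m)%nat ->
  is_series (binom_log_term m r) l ->
  is_series (binom_log_term m (S r))
    (/ INR (S r) * (INR (m - S r) * l + 2 * sum_f_R0 (fun i => C m i) r)).
Proof.
  intros Hr Hl.
  apply (is_series_ext _ _ _ (fun k => eq_sym (binom_log_term_succ m r k Hr))).
  pose proof (is_series_plus _ _ _ _ (is_series_scal (INR (m - S r)) _ _ Hl)
    (is_series_C_geom m r ltac:(lia))) as Hsum.
  exact (is_series_scal (/ INR (S r)) _ _ Hsum).
Qed.

Fixpoint binom_ratio_sum (N r : nat) : R :=
  match r with
  | O => 0
  | S r' => binom_ratio_sum N r' + sum_f_R0 (fun i => C (S N) i) r' / C N r'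
  end.

Lemma binom_ratio_sum_succ (N r : nat) :
  binom_ratio_sum N (S r) = sum_f_R0 (fun j => sum_f_R0 (fun i => C (S N) i / C N j) j) r.
Proof.
  induction r as [|r IH].
  - simpl. unfold Rdiv. ring.
  - rewrite tech5, <- IH. cbn [binom_ratio_sum]. f_equal.
    unfold Rdiv. rewrite <- scal_sum. apply Rmult_comm.
Qed.

(* The solution of the recurrence of [is_series_binom_log_succ] with initial value 2 ln 2. *)
Definition binom_log_value (N r : nat) : R :=
  C (S N) r * (2 * ln 2 + 4 / INR (S N) * binom_ratio_sum N r
               - 2 * (harm (S N) - harm (S N - r))).

Lemma binom_log_value_succ (N r : nat) : (r <= N)%nat ->
  binom_log_value N (S r)
  = / INR (S r) * (INR (S (S N) - S r) * binom_log_value N r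
                   + 2 * sum_f_R0 (fun i => C (S (S N)) i) r).
Proof.
  intros Hr. unfold binom_log_value. cbn [binom_ratio_sum].
  rewrite (sum_C_succ (S N) r), (pascal_step3 (S N) r), (pascal_step2 N r) by lia.
  replace (S (S N) - S r)%nat with (S (N - r)) by lia.
  replace (S N - r)%nat with (S (N - r)) by lia.
  replace (S N - S r)%nat with (N - r)%nat by lia.
  cbn [harm].
  pose proof (C_pos N r).
  assert (0 < INR (S (N - r))) by (apply lt_0_INR; lia).
  assert (0 < INR (S r)) by (apply lt_0_INR; lia).
  assert (0 < INR (S N)) by (apply lt_0_INR; lia).
  field. repeat split; lra.
Qed.

Lemma is_series_binom_log (N r : nat) : (r <= S N)%nat ->
  is_series (binom_log_term (S (S N)) r) (binom_log_value N r).
Proof.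
  induction r as [|r IH]; intros Hr.
  - replace (binom_log_value N 0) with (2 * ln 2)
      by (unfold binom_log_value; rewrite C_n_0, Nat.sub_0_r; simpl; ring).
    apply (is_series_ext (fun k => (1/2) ^ k / INR (S k))); [|exact is_series_log2].
    intros k. unfold binom_log_term. now rewrite C_n_0, Rmult_1_l.
  - rewrite binom_log_value_succ by lia.
    apply is_series_binom_log_succ; [lia | apply IH; lia].
Qed.

Lemma poch_INR_succ (c k : nat) : poch (INR (S c)) k = INR (fact (c + k)) / INR (fact c).
Proof.
  induction k as [|k IH].
  - rewrite Nat.add_0_r. simpl. field. apply INR_fact_neq_0.
  - cbn [poch]. rewrite IH, Nat.add_succ_r, fact_simpl, mult_INR, <- plus_INR.
    replace (S c + k)%nat with (S (c + k)) by lia.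
    field. apply INR_fact_neq_0.
Qed.

Lemma hyp3F2_term_binom_log (n k : nat) :
  hyp3F2_term 1 1 (INR (3 * n + 3)) 2 (INR (n + 2)) (1 / 2) k
  = binom_log_term (S (S (3 * n))) (2 * n + 1) k * / C (3 * n + 2) (2 * n + 1).
Proof.
  unfold hyp3F2_term, binom_log_term, C.
  replace 1 with (INR (S 0)) at 1 2 by reflexivity.
  replace 2 with (INR (S 1)) at 1 by reflexivity.
  replace (3 * n + 3)%nat with (S (3 * n + 2)) by lia.
  replace (n + 2)%nat with (S (n + 1)) by lia.
  rewrite !poch_INR_succ.
  replace (S (S (3 * n)) + k)%nat with (3 * n + 2 + k)%nat by lia.
  replace (3 * n + 2 + k - (2 * n + 1))%nat with (n + 1 + k)%nat by lia.
  replace (3 * n + 2 - (2 * n + 1))%nat with (n + 1)%nat by lia.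
  replace (1 + k)%nat with (S k) by lia.
  rewrite Nat.add_0_l, fact_simpl, mult_INR.
  pose proof (INR_fact_neq_0 k). pose proof (INR_fact_neq_0 (3 * n + 2 + k)).
  pose proof (INR_fact_neq_0 (3 * n + 2)). pose proof (INR_fact_neq_0 (n + 1 + k)).
  pose proof (INR_fact_neq_0 (n + 1)). pose proof (INR_fact_neq_0 (2 * n + 1)).
  assert (0 < INR (S k)) by (apply lt_0_INR; lia).
  simpl (fact 0). simpl (fact 1). simpl (INR 1).
  field. repeat split; lra.
Qed.

Theorem mainTheorem16 (n : nat) :
  exists F : R,
    is_hyp3F2 1 1 (INR (3 * n + 3)) 2 (INR (n + 2)) (1 / 2) F /\
    2 / INR (3 * n + 1) *
      sum_f_R0 (fun j => sum_f_R0 (fun i => C (3 * n + 1) i / C (3 * n) j) j) (2 * n)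
    = (harm (3 * n + 1) - harm n) - ln 2
      + INR (3 * n + 2) / INR (2 * n + 2) * F.
Proof.
  exists (binom_log_value (3 * n) (2 * n + 1) * / C (3 * n + 2) (2 * n + 1)).
  split.
  - apply is_series_Reals.
    apply (is_series_ext _ _ _ (fun k => eq_sym (hyp3F2_term_binom_log n k))).
    apply is_series_scal_r, is_series_binom_log. lia.
  - unfold binom_log_value.
    replace (2 * n + 1)%nat with (S (2 * n)) by lia.
    replace (3 * n + 1)%nat with (S (3 * n)) by lia.
    replace (3 * n + 2)%nat with (S (S (3 * n))) by lia.
    replace (S (3 * n) - S (2 * n))%nat with n by lia.
    rewrite binom_ratio_sum_succ, (pascal_step2 (S (3 * n)) (S (2 * n))) by lia.
    replace (S (S (3 * n)) - S (2 * n))%nat with (S n) by lia.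
    replace (INR (2 * n + 2)) with (2 * INR (S n))
      by (rewrite S_INR, plus_INR, mult_INR; simpl; ring).
    pose proof (C_pos (S (3 * n)) (S (2 * n))).
    assert (0 < INR (S n)) by (apply lt_0_INR; lia).
    assert (0 < INR (S (3 * n))) by (apply lt_0_INR; lia).
    assert (0 < INR (S (S (3 * n)))) by (apply lt_0_INR; lia).
    field. repeat split; lra.
Qed.
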